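(* Let $X$, $Z$ be topological vector spaces, $C\subseteq Z$ a nonempty closed convex cone with $C^-\neq\{0\}$, and $f:X\to\mathcal{F}(Z,C)$ convex. If $f$ is lower continuous at $x_0\in{\rm dom\,} f$, then $f$ is lower lattice-semicontinuous at $x_0$.
   Context: $\mathcal{F}(Z,C)=\{A\subseteq Z\colon A=\operatorname{cl}(A+C)\}$ (empty set included); $C^-=\{z^*\in Z^*\colon z^*(z)\le0\ \forall z\in C\}$; ${\rm dom\,} f=\{x\colon f(x)\neq\emptyset\}$. $f$ is convex iff $tf(x_1)+(1-t)f(x_2)\subseteq f(tx_1+(1-t)x_2)$ for all $x_1,x_2$, $t\in(0,1)$. $f$ is lower continuous at $x_0$ iff for every $z_0\in f(x_0)$ and every neighborhood $V$ of $z_0$ there is a neighborhood $U$ of $x_0$ with $f(x)\cap V\neq\emptyset$ for all $x\in U$. $f$ is lower lattice-semicontinuous at $x_0$ iff $f(x_0)\supseteq\bigcap_{U\in\mathcal{N}(x_0)}\operatorname{cl}\bigcup_{x\in U}f(x)$ ($\mathcal{N}(x_0)$ the neighborhoods of $x_0$); equivalently, for every $z_0\notin f(x_0)$ there exist a neighborhood $U$ of $x_0$ and a neighborhood $V$ of $z_0$ with $z\notin f(x)$ for all $x\in U$, $z\in V$. *)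

From HB Require Import structures.
From mathcomp Require Import all_boot all_order all_algebra.
From mathcomp Require Import all_classical all_reals all_analysis.
Set Implicit Arguments. Unset Strict Implicit. Unset Printing Implicit Defensive.
Import Order.TTheory GRing.Theory Num.Theory.
Import numFieldTopology.Exports numFieldNormedType.Exports.
Local Open Scope classical_set_scope.
Local Open Scope ring_scope.

Section Defs.
Variable R : realType.

Definition msum (V : lmodType R) (A B : set V) : set V :=
  [set a + b | a in A & b in B].
Definition mscale (V : lmodType R) (t : R) (A : set V) : set V :=
  [set t *: a | a in A].

Definition is_convex_cone (V : lmodType R) (C : set V) : Prop :=
  (forall t c, 0 < t -> C c -> C (t *: c)) /\
  (forall t c1 c2, 0 <= t <= 1 -> C c1 -> C c2 -> C (t *: c1 + (1 - t) *: c2)).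

Definition neg_dual_cone (Z : topologicalLmodType R) (C : set Z) : set (Z -> R) :=
  [set g | (forall (a : R) (u v : Z), g (a *: u + v) = a * g u + g v)
           /\ continuous g /\ (forall z, C z -> g z <= 0)].

Definition in_FZC (Z : topologicalLmodType R) (C : set Z) (A : set Z) : Prop :=
  A = closure (msum A C).

Definition dom (X Z : Type) (f : X -> set Z) : set X := [set x | f x !=set0].

Definition set_convex (X Z : lmodType R) (f : X -> set Z) : Prop :=
  forall x1 x2 (t : R), 0 < t < 1 ->
    msum (mscale t (f x1)) (mscale (1 - t) (f x2)) `<=` f (t *: x1 + (1 - t) *: x2).

Definition lower_continuous_at (X Z : topologicalType) (f : X -> set Z) (x0 : X) :=
  forall z0, f x0 z0 -> forall V, nbhs z0 V ->
    exists2 U, nbhs x0 U & forall x, U x -> f x `&` V !=set0.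

Definition lower_lattice_semicontinuous_at (X Z : topologicalType)
    (f : X -> set Z) (x0 : X) :=
  \bigcap_(U in [set U | nbhs x0 U]) closure (\bigcup_(x in U) f x) `<=` f x0.
End Defs.

From HB Require Import structures.
From mathcomp Require Import all_boot all_order all_algebra.
From mathcomp Require Import all_classical all_reals all_analysis.
From mathcomp Require Import lra ring.
Import Order.TTheory GRing.Theory Num.Theory.
Import numFieldTopology.Exports numFieldNormedType.Exports.
Local Open Scope classical_set_scope.
Local Open Scope ring_scope.

(* Suppose [z0] lies in the lattice lower limit of [f] at [x0] but not in the
   closed set [f x0], and pick [y0] in [f x0].  By continuity of
   [(t, z, y) |-> t z + (1 - t) y] at [(1, z0, y0)] there are [t < 1] close to
   [1] and neighbourhoods [V] of [z0], [V'] of [y0] with [t V + (1 - t) V']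
   disjoint from [f x0].  Every [x] near [x0] can be written
   [x0 = t x + (1 - t) x'] with [x'] near [x0]; lower continuity at [y0] gives
   a point of [f x'] in [V'], the lattice lower limit a point of [f x] in [V],
   and convexity of [f] puts their combination in [f x0]: a contradiction.
   Only closedness of the values of [f] is needed from [C]. *)

Section ConvexCombinations.
Variable R : realType.

Lemma cvg_scaleD (Z : topologicalLmodType R) (T : Type) (F : set_system T)
    (FF : Filter F) (a b : T -> R^o) (u v : T -> Z) (a0 b0 : R^o) (u0 v0 : Z) :
  a @ F --> a0 -> b @ F --> b0 -> u @ F --> u0 -> v @ F --> v0 ->
  (fun x => a x *: u x + b x *: v x) @ F --> a0 *: u0 + b0 *: v0.
Proof.
move=> ha hb hu hv.
have scale_cvg (c : T -> R^o) (w : T -> Z) (c0 : R^o) (w0 : Z) :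
    c @ F --> c0 -> w @ F --> w0 -> (fun x => c x *: w x) @ F --> c0 *: w0.
  move=> hc hw.
  apply: (@continuous2_cvg _ _ _ _ _ _ _ _ (fun (r : R^o) (z : Z) => r *: z)) => //.
  exact: (@scale_continuous _ _ (_, _)).
apply: (@continuous2_cvg _ _ _ _ _ _ _ _ (fun p q : Z => p + q)); last 2 first.
- exact: scale_cvg.
- exact: scale_cvg.
exact: (@add_continuous _ (_, _)).
Qed.

Lemma nbhs_convex_comb_near1 (Z : topologicalLmodType R) (z0 y0 : Z) (W : set Z) :
  nbhs z0 W ->
  exists t : R, [/\ 0 < t < 1 &
    exists V, exists2 V', nbhs z0 V /\ nbhs y0 V' &
      forall z w, V z -> V' w -> W (t *: z + (1 - t) *: w)].
Proof.
move=> Wz0.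
pose h (p : R^o * (Z * Z)) := p.1 *: p.2.1 + (1 - p.1) *: p.2.2.
have hcvg : h @ nbhs ((1 : R^o), (z0, y0)) --> (1 : R^o) *: z0 + (1 - 1 : R^o) *: y0.
  apply: cvg_scaleD.
  - exact: cvg_fst.
  - apply: (@continuous2_cvg _ _ _ _ _ _ _ _ (fun a b : R^o => a - b)).
    + exact: (@sub_continuous _ (_, _)).
    + exact: cvg_cst.
    + exact: cvg_fst.
  - exact: (cvg_comp _ _ cvg_snd cvg_fst).
  - exact: (cvg_comp _ _ cvg_snd cvg_snd).
rewrite scale1r subrr scale0r addr0 in hcvg.
have [[T VV] /= [Tn VVn] TVV_W] := hcvg _ Wz0.
have [[V V'] /= [Vn V'n] VV'_VV] := VVn.
move: Tn => /nbhs_ballP [e /= e0 eT].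
pose d := Num.min e 1 / 2.
have d0 : 0 < d by rewrite divr_gt0 // lt_min e0 ltr01.
have min1 : Num.min e 1 <= 1 by rewrite ge_min lexx orbT.
have mine : Num.min e 1 <= e by rewrite ge_min lexx.
have d1 : d < 1 by rewrite /d; lra.
have de : d < e by rewrite /d; lra.
exists (1 - d); split; first by apply/andP; split; lra.
exists V, V' => // z w Vz V'w.
apply: (TVV_W (1 - d, (z, w))); split; last exact: (VV'_VV (z, w)).
by apply: eT; rewrite /ball /= opprB addrC subrK ger0_norm ?ltW.
Qed.

(* The point [x'] is the reflection [(x0 - t x) / (1 - t)], which tends to [x0]
   as [x] does. *)
Lemma near_affine_decomposition (X : topologicalLmodType R) (x0 : X) (t : R)
    (U' : set X) :
  t != 1 -> nbhs x0 U' ->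
  \forall x \near x0, exists2 x', U' x' & t *: x + (1 - t) *: x' = x0.
Proof.
move=> t1 U'x0.
have t1' : 1 - t != 0 by rewrite subr_eq0 eq_sym.
pose c := t / (1 - t).
pose g (x : X) := (1 + c) *: x0 + (- c) *: x.
have gcvg : g @ nbhs x0 --> (1 + c : R^o) *: x0 + (- c : R^o) *: x0.
  by apply: cvg_scaleD; [exact: cvg_cst | exact: cvg_cst | exact: cvg_cst | exact: cvg_id].
rewrite -scalerDl addrK scale1r in gcvg.
near=> x; have U'gx : U' (g x) by near: x; exact: gcvg.
exists (g x) => //.
have e1 : (1 - t) * (1 + c) = 1 by rewrite /c; field.
have e2 : (1 - t) * (- c) = - t by rewrite /c; field.
by rewrite /g scalerDr !scalerA e1 e2 scale1r scaleNr addrCA subrr addr0.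
Unshelve. all: by end_near.
Qed.

Lemma lower_continuous_lattice_semicontinuous (X Z : topologicalLmodType R)
    (f : X -> set Z) (x0 : X) :
  closed (f x0) -> set_convex f -> dom f x0 -> lower_continuous_at f x0 ->
  lower_lattice_semicontinuous_at f x0.
Proof.
move=> fx0_closed fconv [y0 fx0y0] flc z0 z0lim.
apply: contrapT => fx0z0.
have z0out : nbhs z0 (~` f x0).
  by move: (closed_openC fx0_closed); rewrite openE; apply.
have [t [t01 [V [V' [Vn V'n] VV'out]]]] :=
  @nbhs_convex_comb_near1 _ z0 y0 _ z0out.
have t1 : t != 1 by case/andP: t01 => _ /lt_eqF ->.
have [U' U'n U'meets] := flc y0 fx0y0 V' V'n.
have Un := @near_affine_decomposition _ _ _ _ t1 U'n.
have [z [[x Ux fxz] Vz]] := z0lim _ Un V Vn.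
have [x' U'x' decx] := Ux.
have [w [fx'w V'w]] := U'meets x' U'x'.
apply: (VV'out z w Vz V'w); rewrite -decx.
apply: (fconv x x' t t01).
by exists (t *: z); [exists z | exists ((1 - t) *: w); [exists w|]].
Qed.

End ConvexCombinations.

Theorem mainTheorem8 (R : realType) (X Z : topologicalLmodType R) (C : set Z)
  (f : X -> set Z) (x0 : X) :
  C !=set0 -> closed C -> is_convex_cone C ->
  (exists2 g, neg_dual_cone C g & g <> (fun _ => 0)) ->
  (forall x, in_FZC C (f x)) ->
  set_convex f ->
  dom f x0 ->
  lower_continuous_at f x0 ->
  lower_lattice_semicontinuous_at f x0.
Proof.
move=> _ _ _ _ fFZC fconv x0dom flc.
apply: lower_continuous_lattice_semicontinuous => //.
by rewrite (fFZC x0); exact: closed_closure.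
Qed.
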